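(* Let $M^2$ be a surface in $\mathbb{R}^4$ free of flat points. Then $M^2$ is minimal (its mean curvature vector field $H$ vanishes identically) if and only if at each point of $M^2$ the tangent indicatrix $\chi$ is a circle, i.e. the two principal normal curvatures satisfy $\nu'=\nu''$.
   Context: Let $M^2: z=z(u,v)$ be a regular surface in $\mathbb{R}^4$ with first fundamental form $I=E\,du^2+2F\,du\,dv+G\,dv^2$, $W=\sqrt{EG-F^2}$. Choose an orthonormal normal frame $\{e_1,e_2\}$ with $\{z_u,z_v,e_1,e_2\}$ positively oriented, write $\sigma(z_u,z_u)=c_{11}^1e_1+c_{11}^2e_2$, $\sigma(z_u,z_v)=c_{12}^1e_1+c_{12}^2e_2$, $\sigma(z_v,z_v)=c_{22}^1e_1+c_{22}^2e_2$ ($\sigma$ the second fundamental form), and set $L=\frac{2}{W}(c_{11}^1c_{12}^2-c_{12}^1c_{11}^2)$, $M=\frac{1}{W}(c_{11}^1c_{22}^2-c_{22}^1c_{11}^2)$, $N=\frac{2}{W}(c_{12}^1c_{22}^2-c_{22}^1c_{12}^2)$. The quadratic form $II(\lambda,\mu)=L\lambda^2+2M\lambda\mu+N\mu^2$ on tangent vectors $\lambda z_u+\mu z_v$ is the (invariant) second fundamental form. A point is flat if $L=M=N=0$; ''free of flat points'' means $(L,M,N)\ne(0,0,0)$ everywhere. At each point, the principal normal curvatures $\nu',\nu''$ are the two roots of $(EG-F^2)\nu^2-(EN+GL-2FM)\nu+(LN-M^2)=0$ (the eigenvalues of $II$ relative to $I$), and the principal directions are the corresponding $I$-orthogonal eigendirections.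 The tangent indicatrix $\chi$ at $p$ is the conic in $T_pM^2$ given, in Cartesian coordinates $(X,Y)$ with respect to an orthonormal basis of principal directions, by $\nu'X^2+\nu''Y^2=\varepsilon$, $\varepsilon=\pm1$. *)

From HB Require Import structures.
From mathcomp Require Import all_boot all_order all_algebra.
From mathcomp Require Import all_classical all_reals all_analysis.
Set Implicit Arguments. Unset Strict Implicit. Unset Printing Implicit Defensive.
Import Order.TTheory GRing.Theory Num.Theory.
Import numFieldNormedType.Exports.
Local Open Scope classical_set_scope.
Local Open Scope ring_scope.

Section SurfaceR4.
Variable R : realType.

Notation R4 := 'rV[R]_4.

Definition dot4 (a b : R4) : R := \sum_(i < 4) a ord0 i * b ord0 i.

Definition pu (z : R -> R -> R4) : R -> R -> R4 :=
  fun u v => derive1 (fun s => z s v) u.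
Definition pv (z : R -> R -> R4) : R -> R -> R4 :=
  fun u v => derive1 (fun t => z u t) v.

Definition twice_partially_derivable (z : R -> R -> R4) (u v : R) : Prop :=
  [/\ derivable (fun s => z s v) u 1, derivable (fun t => z u t) v 1,
      derivable (fun s => pu z s v) u 1, derivable (fun t => pu z u t) v 1
    & derivable (fun t => pv z u t) v 1].

Definition regular_at (z : R -> R -> R4) (u v : R) : Prop :=
  \rank (col_mx (pu z u v) (pv z u v)) = 2%N.

Definition Ecoef z u v := dot4 (pu z u v) (pu z u v).
Definition Fcoef z u v := dot4 (pu z u v) (pv z u v).
Definition Gcoef z u v := dot4 (pv z u v) (pv z u v).
Definition Wcoef z u v := Num.sqrt (Ecoef z u v * Gcoef z u v - Fcoef z u v ^+ 2).

Definition rows4 (a b c d : R4) : 'M[R]_4 :=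
  \matrix_(i < 4, j < 4) (nth 0 [:: a; b; c; d] i) ord0 j.

Definition normal_frame_at (z : R -> R -> R4) (e1 e2 : R -> R -> R4) (u v : R) : Prop :=
  [/\ dot4 (e1 u v) (e1 u v) = 1, dot4 (e2 u v) (e2 u v) = 1,
      dot4 (e1 u v) (e2 u v) = 0,
      [/\ dot4 (e1 u v) (pu z u v) = 0, dot4 (e1 u v) (pv z u v) = 0,
          dot4 (e2 u v) (pu z u v) = 0 & dot4 (e2 u v) (pv z u v) = 0]
    & 0 < \det (rows4 (pu z u v) (pv z u v) (e1 u v) (e2 u v))].

Definition zuu z := pu (pu z).
Definition zuv z := pv (pu z).
Definition zvv z := pv (pv z).

(* coefficients of the second fundamental form sigma in the frame:
   sigma(z_u,z_u) = c11^1 e1 + c11^2 e2 is the normal part of z_uu, etc. *)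
Definition c11 z (e : R -> R -> R4) u v := dot4 (zuu z u v) (e u v).
Definition c12 z (e : R -> R -> R4) u v := dot4 (zuv z u v) (e u v).
Definition c22 z (e : R -> R -> R4) u v := dot4 (zvv z u v) (e u v).

Definition sigma11 z e1 e2 u v : R4 := c11 z e1 u v *: e1 u v + c11 z e2 u v *: e2 u v.
Definition sigma12 z e1 e2 u v : R4 := c12 z e1 u v *: e1 u v + c12 z e2 u v *: e2 u v.
Definition sigma22 z e1 e2 u v : R4 := c22 z e1 u v *: e1 u v + c22 z e2 u v *: e2 u v.

(* mean curvature vector H = (1/2) tr_I sigma *)
Definition Hvec z e1 e2 u v : R4 :=
  (2 * (Ecoef z u v * Gcoef z u v - Fcoef z u v ^+ 2))^-1 *:
    (Gcoef z u v *: sigma11 z e1 e2 u v - (2 * Fcoef z u v) *: sigma12 z e1 e2 u v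
     + Ecoef z u v *: sigma22 z e1 e2 u v).

Definition Lcoef z e1 e2 u v :=
  2 / Wcoef z u v * (c11 z e1 u v * c12 z e2 u v - c12 z e1 u v * c11 z e2 u v).
Definition Mcoef z e1 e2 u v :=
  1 / Wcoef z u v * (c11 z e1 u v * c22 z e2 u v - c22 z e1 u v * c11 z e2 u v).
Definition Ncoef z e1 e2 u v :=
  2 / Wcoef z u v * (c12 z e1 u v * c22 z e2 u v - c22 z e1 u v * c12 z e2 u v).

Definition flat_point z e1 e2 u v : Prop :=
  [/\ Lcoef z e1 e2 u v = 0, Mcoef z e1 e2 u v = 0 & Ncoef z e1 e2 u v = 0].

(* principal normal curvatures: the two roots of
   (EG-F^2) nu^2 - (EN+GL-2FM) nu + (LN-M^2) = 0 *)
Definition qa z u v := Ecoef z u v * Gcoef z u v - Fcoef z u v ^+ 2.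
Definition qb z e1 e2 u v :=
  Ecoef z u v * Ncoef z e1 e2 u v + Gcoef z u v * Lcoef z e1 e2 u v
  - 2 * Fcoef z u v * Mcoef z e1 e2 u v.
Definition qc z e1 e2 u v :=
  Lcoef z e1 e2 u v * Ncoef z e1 e2 u v - Mcoef z e1 e2 u v ^+ 2.
Definition qdisc z e1 e2 u v :=
  qb z e1 e2 u v ^+ 2 - 4 * qa z u v * qc z e1 e2 u v.

Definition nu1 z e1 e2 u v :=
  (qb z e1 e2 u v + Num.sqrt (qdisc z e1 e2 u v)) / (2 * qa z u v).
Definition nu2 z e1 e2 u v :=
  (qb z e1 e2 u v - Num.sqrt (qdisc z e1 e2 u v)) / (2 * qa z u v).

End SurfaceR4.

From HB Require Import structures.
From mathcomp Require Import all_boot all_order all_algebra.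
From mathcomp Require Import all_classical all_reals all_analysis.
From mathcomp Require Import ring lra.
Set Implicit Arguments. Unset Strict Implicit. Unset Printing Implicit Defensive.
Import Order.TTheory GRing.Theory Num.Theory.
Import numFieldNormedType.Exports.
Local Open Scope classical_set_scope.
Local Open Scope ring_scope.

(* The statement is pointwise and purely algebraic.  Write a = (c11^1, c12^1,
   c22^1), b = (c11^2, c12^2, c22^2) and w = (G, -2F, E).  Then H is a positive
   multiple of (w.a) e1 + (w.b) e2, while (L/2, M, N/2) is W^-1 times the
   cross product a x b up to order and signs, so it is non-zero off flat
   points.  Hence H = 0 iff w.a = w.b = 0 iff w x (a x b) = (w.b) a - (w.a) b
   vanishes, and the components of w x (a x b) are W(EM - FL), W(EN - GL)/2
   and W(FN - GM).  On the other side, nu' = nu'' iff the discriminant of the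
   quadratic vanishes, and E^2 times that discriminant is the sum of squares
   (E(EN - GL) - 2F(EM - FL))^2 + 4(EG - F^2)(EM - FL)^2. *)

Section InvariantAlgebra.
Variable R : rcfType.

Lemma quadratic_roots_eq_iff (a b c : R) : a != 0 ->
  (b + Num.sqrt (b ^+ 2 - 4 * a * c)) / (2 * a)
    = (b - Num.sqrt (b ^+ 2 - 4 * a * c)) / (2 * a)
  <-> b ^+ 2 - 4 * a * c <= 0.
Proof.
move=> a0; set s := Num.sqrt _.
have diffE : (b + s) / (2 * a) - (b - s) / (2 * a) = s / a by field.
rewrite -sqrtr_eq0 -/s; split => [roots_eq | /eqP ->]; last by rewrite addr0 subr0.
by move: diffE; rewrite roots_eq subrr => /esym/eqP; rewrite mulf_eq0 invr_eq0 (negbTE a0) orbF.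
Qed.

Section PrincipalDiscriminant.
Variables E F G L M N : R.

Local Notation disc :=
  ((E * N + G * L - 2 * F * M) ^+ 2 - 4 * (E * G - F ^+ 2) * (L * N - M ^+ 2)).

Lemma principal_disc_sum_of_squares :
  E ^+ 2 * disc = (E * (E * N - G * L) - 2 * F * (E * M - F * L)) ^+ 2
                  + 4 * (E * G - F ^+ 2) * (E * M - F * L) ^+ 2.
Proof. ring. Qed.

Lemma principal_disc_le0_iff : 0 < E -> 0 < E * G - F ^+ 2 ->
  disc <= 0 <-> [/\ E * M - F * L = 0, E * N - G * L = 0 & F * N - G * M = 0].
Proof.
move=> E_gt0 q_gt0.
have E_cancel x : E * x = 0 -> x = 0.
  by move/eqP; rewrite mulf_eq0 gt_eqF //= => /eqP.
have E2_gt0 : 0 < E ^+ 2 by rewrite exprn_gt0.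
have ratio : E * (F * N - G * M) = F * (E * N - G * L) - G * (E * M - F * L)
  by ring.
have sos := principal_disc_sum_of_squares.
split => [disc_le0 | [alpha0 beta0 _]].
- have : E ^+ 2 * disc <= 0 by rewrite pmulr_rle0.
  rewrite sos => sos_le0.
  have alpha0 : E * M - F * L = 0.
    have P_ge0 := sqr_ge0 (E * (E * N - G * L) - 2 * F * (E * M - F * L)).
    by apply/eqP; rewrite -sqrf_eq0 eq_le sqr_ge0 andbT; nra.
  have beta0 : E * N - G * L = 0.
    have sq_le0 : (E * (E * N - G * L)) ^+ 2 <= 0
      by move: sos_le0; rewrite alpha0; lra.
    by apply: E_cancel; apply/eqP; rewrite -sqrf_eq0 eq_le sq_le0 sqr_ge0.
  by split => //; apply: E_cancel; rewrite ratio alpha0 beta0 !mulr0 subr0.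
- have : E ^+ 2 * disc = 0 by rewrite sos alpha0 beta0; ring.
  by move/eqP; rewrite mulf_eq0 (negbTE (lt0r_neq0 E2_gt0)) => /eqP ->.
Qed.

End PrincipalDiscriminant.

Section TraceOfTwoForms.
Variables E F G a1 a2 a3 b1 b2 b3 : R.

Local Notation l := (a1 * b2 - a2 * b1).
Local Notation m := (a1 * b3 - a3 * b1).
Local Notation n := (a2 * b3 - a3 * b2).
Local Notation X := (G * a1 - 2 * F * a2 + E * a3).
Local Notation Y := (G * b1 - 2 * F * b2 + E * b3).

Lemma traces_eq0_iff : ~ [/\ l = 0, m = 0 & n = 0] ->
  X = 0 /\ Y = 0 <->
  [/\ E * m - 2 * F * l = 0, E * n - G * l = 0 & 2 * F * n - G * m = 0].
Proof.
move=> lmn_neq0.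
have double_cross1 : E * m - 2 * F * l = a1 * Y - b1 * X by ring.
have double_cross2 : E * n - G * l = a2 * Y - b2 * X by ring.
have double_cross3 : 2 * F * n - G * m = a3 * Y - b3 * X by ring.
split => [[X0 Y0] | [V1 V2 V3]].
  by rewrite double_cross1 double_cross2 double_cross3 X0 Y0 !mulr0 subrr.
have eq0_of_mul_lmn T : T * l = 0 -> T * m = 0 -> T * n = 0 -> T = 0.
  move=> Tl Tm Tn; apply/eqP/negPn/negP => T_neq0; apply: lmn_neq0.
  have T_cancel x : T * x = 0 -> x = 0.
    by move/eqP; rewrite mulf_eq0 (negbTE T_neq0) => /eqP.
  by split; apply: T_cancel.
split; apply: eq0_of_mul_lmn.
- by transitivity (a2 * (E * m - 2 * F * l) - a1 * (E * n - G * l));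
    [ring | rewrite V1 V2; ring].
- by transitivity (a3 * (E * m - 2 * F * l) - a1 * (2 * F * n - G * m));
    [ring | rewrite V1 V3; ring].
- by transitivity (a3 * (E * n - G * l) - a2 * (2 * F * n - G * m));
    [ring | rewrite V2 V3; ring].
- by transitivity (b2 * (E * m - 2 * F * l) - b1 * (E * n - G * l));
    [ring | rewrite V1 V2; ring].
- by transitivity (b3 * (E * m - 2 * F * l) - b1 * (2 * F * n - G * m));
    [ring | rewrite V1 V3; ring].
- by transitivity (b3 * (E * n - G * l) - b2 * (2 * F * n - G * m));
    [ring | rewrite V2 V3; ring].
Qed.

End TraceOfTwoForms.

Lemma invariant_relations_eq0_iff (E F G W l m n : R) : W != 0 ->
  [/\ E * (1 / W * m) - F * (2 / W * l) = 0,
      E * (2 / W * n) - G * (2 / W * l) = 0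
    & F * (2 / W * n) - G * (1 / W * m) = 0]
  <-> [/\ E * m - 2 * F * l = 0, E * n - G * l = 0 & 2 * F * n - G * m = 0].
Proof.
move=> W_neq0.
have W_cancel x : W * x = 0 -> x = 0.
  by move/eqP; rewrite mulf_eq0 (negbTE W_neq0) => /eqP.
have E1 : W * (E * (1 / W * m) - F * (2 / W * l)) = E * m - 2 * F * l by field.
have E2 : W * (E * (2 / W * n) - G * (2 / W * l)) = 2 * (E * n - G * l)
  by field.
have E3 : W * (F * (2 / W * n) - G * (1 / W * m)) = 2 * F * n - G * m by field.
split => [[V1 V2 V3] | [V1 V2 V3]].
- split; [by rewrite -E1 V1 mulr0 | | by rewrite -E3 V3 mulr0].
  have : 2 * (E * n - G * l) = 0 by rewrite -E2 V2 mulr0.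
  by move/eqP; rewrite mulf_eq0 pnatr_eq0 => /eqP.
- by split; apply: W_cancel; rewrite ?E1 ?E2 ?E3 ?V1 ?V2 ?V3 ?mulr0.
Qed.

End InvariantAlgebra.

Lemma frame_combE (R : comNzRingType) (n : nat) (E F G a1 a2 a3 b1 b2 b3 : R)
    (e f : 'rV[R]_n) :
  G *: (a1 *: e + b1 *: f) - (2 * F) *: (a2 *: e + b2 *: f)
    + E *: (a3 *: e + b3 *: f)
  = (G * a1 - 2 * F * a2 + E * a3) *: e + (G * b1 - 2 * F * b2 + E * b3) *: f.
Proof. by apply/rowP => j; rewrite !mxE; ring. Qed.

Section Surface.
Variable R : realType.
Implicit Types a b c : 'rV[R]_4.

Lemma dot4C a b : dot4 a b = dot4 b a.
Proof. by apply: eq_bigr => i _; rewrite mulrC. Qed.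

Lemma dot4_ge0 a : 0 <= dot4 a a.
Proof. by apply: sumr_ge0 => i _; rewrite -expr2 sqr_ge0. Qed.

Lemma dot4_lincomb (x y : R) a b c :
  dot4 (x *: a + y *: b) c = x * dot4 a c + y * dot4 b c.
Proof.
rewrite /dot4 !mulr_sumr -big_split; apply: eq_bigr => i _.
by rewrite !mxE mulrDl !mulrA.
Qed.

Lemma orthonormal_lincomb_eq0 (x y : R) a b :
  dot4 a a = 1 -> dot4 b b = 1 -> dot4 a b = 0 ->
  x *: a + y *: b = 0 -> x = 0 /\ y = 0.
Proof.
move=> aa bb ab comb0.
have dot4_0l c : dot4 0 c = 0 by apply: big1 => i _; rewrite mxE mul0r.
have := dot4_0l a; have := dot4_0l b.
rewrite -comb0 !dot4_lincomb (dot4C b a) aa bb ab => yE xE.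
by split; [move: xE | move: yE]; rewrite !(mulr0, mulr1, addr0, add0r).
Qed.

Section AtAPoint.
Variables (z e1 e2 : R -> R -> 'rV[R]_4) (u v : R).

Local Notation E := (Ecoef z u v).
Local Notation F := (Fcoef z u v).
Local Notation G := (Gcoef z u v).
Local Notation X :=
  (G * c11 z e1 u v - 2 * F * c12 z e1 u v + E * c22 z e1 u v).
Local Notation Y :=
  (G * c11 z e2 u v - 2 * F * c12 z e2 u v + E * c22 z e2 u v).

Lemma HvecE : Hvec z e1 e2 u v = (2 * qa z u v)^-1 *: (X *: e1 u v + Y *: e2 u v).
Proof. by rewrite /Hvec /sigma11 /sigma12 /sigma22 frame_combE. Qed.

(* Off flat points W <> 0, since L, M, N all carry the factor 1/W and 1/0 = 0. *)
Lemma Wcoef_neq0 : ~ flat_point z e1 e2 u v -> Wcoef z u v != 0.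
Proof.
move=> not_flat; apply/eqP => W0; apply: not_flat.
by split; rewrite /Lcoef /Mcoef /Ncoef W0 invr0 mulr0 mul0r.
Qed.

Lemma qa_gt0 : Wcoef z u v != 0 -> 0 < qa z u v.
Proof. by apply: contraNT; rewrite -leNgt -sqrtr_eq0; exact: id. Qed.

Lemma Ecoef_gt0 : 0 < qa z u v -> 0 < E.
Proof.
have E_ge0 : 0 <= E := dot4_ge0 _.
move=> q_gt0; rewrite lt0r E_ge0 andbT; apply/eqP => E0; move: q_gt0.
by rewrite /qa E0 mul0r sub0r oppr_gt0 ltNge sqr_ge0.
Qed.

Lemma Hvec_eq0_iff : normal_frame_at z e1 e2 u v -> 0 < qa z u v ->
  Hvec z e1 e2 u v = 0 <-> X = 0 /\ Y = 0.
Proof.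
move=> [e11 e22 e12 _ _] q_gt0; rewrite HvecE.
split => [/eqP | [-> ->]]; last by rewrite !scale0r addr0 scaler0.
rewrite scaler_eq0 invr_eq0 mulf_eq0 pnatr_eq0 => /orP[/orP[// | q0] | /eqP].
  by move: q_gt0; rewrite lt0r q0.
exact: orthonormal_lincomb_eq0.
Qed.

Lemma nu1_eq_nu2_iff : 0 < qa z u v ->
  nu1 z e1 e2 u v = nu2 z e1 e2 u v <->
  [/\ E * Mcoef z e1 e2 u v - F * Lcoef z e1 e2 u v = 0,
      E * Ncoef z e1 e2 u v - G * Lcoef z e1 e2 u v = 0
    & F * Ncoef z e1 e2 u v - G * Mcoef z e1 e2 u v = 0].
Proof.
move=> q_gt0; rewrite /nu1 /nu2 /qdisc.
apply: iff_trans (quadratic_roots_eq_iff _ _ (lt0r_neq0 q_gt0)) _.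
exact: principal_disc_le0_iff _ _ _ (Ecoef_gt0 q_gt0) q_gt0.
Qed.

Lemma Hvec_eq0_iff_nu1_eq_nu2 :
  normal_frame_at z e1 e2 u v -> ~ flat_point z e1 e2 u v ->
  Hvec z e1 e2 u v = 0 <-> nu1 z e1 e2 u v = nu2 z e1 e2 u v.
Proof.
move=> frame not_flat; have W_neq0 := Wcoef_neq0 not_flat.
have q_gt0 := qa_gt0 W_neq0.
have cross_neq0 : ~ [/\ c11 z e1 u v * c12 z e2 u v - c12 z e1 u v * c11 z e2 u v = 0,
                        c11 z e1 u v * c22 z e2 u v - c22 z e1 u v * c11 z e2 u v = 0
                      & c12 z e1 u v * c22 z e2 u v - c22 z e1 u v * c12 z e2 u v = 0].
  move=> [l0 m0 n0]; apply: not_flat.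
  by split; rewrite /Lcoef /Mcoef /Ncoef; [rewrite l0 | rewrite m0 | rewrite n0];
    rewrite mulr0.
apply: iff_trans (Hvec_eq0_iff frame q_gt0) _.
apply: iff_trans (traces_eq0_iff _ _ _ cross_neq0) _.
apply: iff_trans (iff_sym (invariant_relations_eq0_iff _ _ _ _ _ _ W_neq0)) _.
exact: iff_sym (nu1_eq_nu2_iff q_gt0).
Qed.

End AtAPoint.
End Surface.

Theorem proposition3p3 (R : realType) (D : set (R * R)) (z e1 e2 : R -> R -> 'rV[R]_4) :
  open D ->
  (forall p, D p -> twice_partially_derivable z p.1 p.2) ->
  (forall p, D p -> regular_at z p.1 p.2) ->
  (forall p, D p -> normal_frame_at z e1 e2 p.1 p.2) ->
  (forall p, D p -> ~ flat_point z e1 e2 p.1 p.2) ->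
  ((forall p, D p -> Hvec z e1 e2 p.1 p.2 = 0) <->
   (forall p, D p -> nu1 z e1 e2 p.1 p.2 = nu2 z e1 e2 p.1 p.2)).
Proof.
move=> _ _ _ frame not_flat.
by split=> H p Dp; apply/(Hvec_eq0_iff_nu1_eq_nu2 (frame p Dp) (not_flat p Dp)); exact: H.
Qed.
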